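(* Let $n\ge0$ and let $a_1,\dots,a_{n+1},b_1,\dots,b_n$ be nonzero integers; let $s=[2a_1,2b_1,2a_2,2b_2,\dots,2a_n,2b_n,2a_{n+1}]$, let $k\ne0$ be an integer, and let $$r=[2a_1,2b_1,\dots,2b_n,2a_{n+1},\,2k,\,-2a_{n+1},-2b_n,\dots,-2b_1,-2a_1].$$ Then $K(s)$ and $K(r)$ are 2-component 2-bridge links, and their two-variable Alexander polynomials satisfy $$\Delta_{K(r)}(x,y)=\varepsilon\,x^iy^j\,k\,(x-1)(y-1)\,\big[\Delta_{K(s)}(x,y)\big]^2$$ for some $\varepsilon\in\{\pm1\}$ and integers $i,j$. Consequently $\Delta_{K(r)}(x,y)$ has no zero $(x,y)$ with $\operatorname{Im}x>0$ and $\operatorname{Im}y>0$ if and only if the same holds for $\Delta_{K(s)}(x,y)$.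
   Context: Two-variable Alexander polynomial convention: for $m\in\mathbb Z$ put $G_m=\frac{x^m-y^m}{x-y}$ for $m>0$, $G_0=0$, $G_{-m}=-(xy)^{-m}G_m$ for $m>0$. For $s=[2a_1,2b_1,\dots,2a_N,2b_N,2a_{N+1}]$ the two-variable Alexander polynomial of the 2-bridge link $K(s)$ (oriented as in the standard convention) is, up to units $\pm x^iy^j$, $$\Delta_{K(s)}(x,y)=\sum b_{j_1}\cdots b_{j_m}(x-1)^m(y-1)^mG_{\mu_1}\cdots G_{\mu_{m+1}},$$ the sum over all subsets $\{j_1<\dots<j_m\}\subseteq\{1,\dots,N\}$ ($0\le m\le N$), where $\mu_1=a_1+\dots+a_{j_1}$, $\mu_l=a_{j_{l-1}+1}+\dots+a_{j_l}$, and $\mu_{m+1}=a_{j_m+1}+\dots+a_{N+1}$. Here $K(s)$ is the 2-bridge link with rational number having even continued fraction expansion $1/(s_1-1/(s_2-\cdots))$. *)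

From HB Require Import structures.
From mathcomp Require Import all_boot all_order all_algebra all_field.
Set Implicit Arguments. Unset Strict Implicit. Unset Printing Implicit Defensive.
Import Order.TTheory GRing.Theory Num.Theory.
Local Open Scope ring_scope.

(* G_m for m : int, evaluated at x y in a commutative unit ring.
   For m > 0, G_m = (x^m - y^m)/(x - y) written out as the polynomial
   sum_{i<m} x^i y^(m-1-i); G_0 = 0; G_{-m} = -(xy)^{-m} G_m. *)
Definition Gpos (R : comUnitRingType) (x y : R) (m : nat) : R :=
  \sum_(i < m) x ^+ i * y ^+ (m - 1 - i)%N.

Definition G (R : comUnitRingType) (x y : R) (m : int) : R :=
  match m with
  | Posz m => Gpos x y m
  | Negz m' => - ((x * y) ^- m'.+1) * Gpos x y m'.+1
  end.

(* Block sums mu_1, ..., mu_{m+1}: as = [a_1; ...; a_{N+1}],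
   c = [c_1; ...; c_N] with c_j = true iff j is in the chosen subset
   (cut after a_j). *)
Fixpoint blocks (as_ : seq int) (c : seq bool) (acc : int) : seq int :=
  match as_, c with
  | a :: as', true :: c' => (acc + a) :: blocks as' c' 0
  | a :: as', false :: c' => blocks as' c' (acc + a)
  | a :: as', [::] => blocks as' [::] (acc + a)
  | [::], _ => [:: acc]
  end.

Definition s_as (s : seq int) : seq int :=
  [seq (nth 0 s (2 * i)%N %/ 2)%Z | i <- iota 0 (uphalf (size s))].
Definition s_bs (s : seq int) : seq int :=
  [seq (nth 0 s (2 * i).+1 %/ 2)%Z | i <- iota 0 (size s)./2].

(* Two-variable Alexander polynomial of K(s) (the formula of the paper),
   evaluated at x y : R. Sum over subsets J of {1..N} (here 'I_N). *)
Definition Delta (R : comUnitRingType) (x y : R) (s : seq int) : R :=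
  let as_ := s_as s in let bs := s_bs s in let N := size bs in
  \sum_(J : {set 'I_N})
    (\prod_(j in J) (nth 0 bs j)%:~R) * ((x - 1) * (y - 1)) ^+ #|J| *
    \prod_(mu <- blocks as_ [seq j \in J | j <- enum 'I_N] 0) G x y mu.

Fixpoint interleave (as_ bs : seq int) : seq int :=
  match as_, bs with
  | a :: as', b :: bs' => a :: b :: interleave as' bs'
  | _, _ => as_
  end.
Definition evencf (as_ bs : seq int) : seq int :=
  [seq 2 * z | z <- interleave as_ bs].

Definition cf (s : seq int) : rat :=
  foldr (fun si t => (si%:~R - t)^-1) 0 s.

(* K(s) is a 2-component link: the 2-bridge link with fraction q/p
   (lowest terms) has 2 components iff p is even (Schubert). *)
Definition two_component (s : seq int) : Prop := (2 %| denq (cf s))%Z.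

(* Generic variables x, y of the field of fractions of Z[x][y]:
   Laurent polynomials in x, y live in this field. *)
Notation LF := {fraction {poly {poly int}}}.
Definition Xv : LF := FracField.tofrac ('X : {poly {poly int}}).
Definition Yv : LF := FracField.tofrac ((('X : {poly int}))%:P : {poly {poly int}}).

From HB Require Import structures.
From mathcomp Require Import all_boot all_order all_algebra all_field.
From mathcomp Require Import ring zify.
Set Implicit Arguments. Unset Strict Implicit. Unset Printing Implicit Defensive.
Import Order.TTheory GRing.Theory Num.Theory.
Local Open Scope ring_scope.

(* Put u = (x - 1)(y - 1) ([uxy]), U(m) = [[x^m, G_m], [0, y^m]] and L(b) = [[1, 0], [b u, 1]].
   1. Expanding every factor L(b_j) = 1 + b_j u E_21 of the product
        chain = U(a_1) L(b_1) U(a_2) ... L(b_N) U(a_{N+1})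
      shows that the subset sum defining Delta_{K(s)} is the (1,2) entry of
      chain (lemmas [expansion_cons], [expansion_chain], [Delta_expansion]).
   2. The cocycle identity G_{m+1} = x^m + y G_m makes m |-> U(m) a group
      homomorphism from Z to GL_2 ([UmxD]), and L(b) L(-b) = 1; hence the
      chain P' of the mirrored data (-a_{N+1}, -b_N, ..., -a_1) is the inverse
      of the chain P of s ([chain_mirror]).
   3. The chain of r is P L(k) P^{-1}, whose (1,2) entry is
      k u P_12 (P^{-1})_12 = - k u P_12^2 / det P, with det P = (xy)^(a_1+...+a_{N+1})
      ([Delta_palindrome]).
   4. Independently, the continued fraction of an even expansion of odd length
      is u/v with v even and u odd ([cf_even_expansion]), so both links have two
      components ([two_component_evencf]).
   The theorem follows, the extra factor k (xy)^(-S) (x - 1)(y - 1) being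
   nonzero when Im x > 0 and Im y > 0. *)

Section TwoByTwo.
Variable R : comNzRingType.

Definition mx2 (a b c d : R) : 'M[R]_2 :=
  \matrix_(i, j) if i == 0 then (if j == 0 then a else b)
                 else (if j == 0 then c else d).

Lemma mul_mx2 a b c d a' b' c' d' : mx2 a b c d *m mx2 a' b' c' d' =
  mx2 (a * a' + b * c') (a * b' + b * d') (c * a' + d * c') (c * b' + d * d').
Proof.
apply/matrixP => i j; rewrite !mxE !big_ord_recl big_ord0 !mxE /= addr0.
by case: (i == 0); case: (j == 0).
Qed.

Lemma mx2_1 : 1%:M = mx2 1 0 0 1.
Proof. by apply/matrixP => i j; rewrite !mxE; case: i => [[|[|]]] // ?; case: j => [[|[|]]]. Qed.

Lemma mx2_01 a b c d : mx2 a b c d 0 1 = b.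
Proof. by rewrite mxE. Qed.

Lemma mx2E (A : 'M[R]_2) : A = mx2 (A 0 0) (A 0 1) (A 1 0) (A 1 1).
Proof.
apply/matrixP => i j; rewrite mxE.
by case: i => [[|[|]]] // ?; case: j => [[|[|]]] // ?; congr (A _ _); apply: val_inj.
Qed.

Lemma shear_entry (A B : 'M[R]_2) c :
  (A *m (mx2 1 0 c 1 *m B)) 0 1 = (A *m B) 0 1 + c * A 0 1 * B 0 1.
Proof. by rewrite (mx2E A) (mx2E B) !mul_mx2 !mx2_01; ring. Qed.

Lemma det_mx2 a b c d : \det (mx2 a b c d) = a * d - b * c.
Proof. rewrite (expand_det_row _ 0) !big_ord_recl big_ord0 /cofactor !det_mx11 !mxE /=; ring. Qed.

End TwoByTwo.

Lemma mx2_inv (R : fieldType) (A B : 'M[R]_2) : A *m B = 1%:M -> B 0 1 = - A 0 1 / \det A.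
Proof.
move=> AB; have [uA _] := mulmx1_unit AB.
have -> : B = invmx A by rewrite -[B]mul1mx -(mulVmx uA) -mulmxA AB mulmx1.
rewrite /invmx uA !mxE /cofactor det_mx11 !mxE /=.
have -> : lift 1 0 = 0 :> 'I_2 by apply: val_inj.
have -> : lift 0 0 = 1 :> 'I_2 by apply: val_inj.
by rewrite expr1 mulN1r mulrC.
Qed.

(* All boolean sequences of length n; they index the subsets of {1..n}. *)
Fixpoint bool_seqs (n : nat) : seq (seq bool) :=
  if n is n'.+1 then map (cons false) (bool_seqs n') ++ map (cons true) (bool_seqs n')
  else [:: [::]].

Lemma mem_bool_seqs n c : (c \in bool_seqs n) = (size c == n).
Proof.
elim: n c => [|n IH] [|h c] //=; rewrite mem_cat.
  by apply/norP; split; apply/mapP => -[].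
rewrite eqSS -IH; apply/orP/idP; first by case=> /mapP [c' ? [_ ->]].
by case: h; [right | left]; apply/mapP; exists c.
Qed.

Lemma bool_seqs_uniq n : uniq (bool_seqs n).
Proof.
elim: n => [|n IH] //=; rewrite cat_uniq !map_inj_uniq ?IH //; try by move=> ? ? [].
by rewrite andbT; apply/hasPn => c /mapP [c' _ ->]; apply/mapP => -[].
Qed.

Lemma sum_subsets (V : nmodType) n (F : seq bool -> V) :
  \sum_(J : {set 'I_n}) F [seq j \in J | j <- enum 'I_n] = \sum_(c <- bool_seqs n) F c.
Proof.
rewrite -(big_map (fun J : {set 'I_n} => [seq j \in J | j <- enum 'I_n]) xpredT F).
apply: perm_big; apply: uniq_perm; rewrite ?bool_seqs_uniq //.
  rewrite map_inj_uniq ?index_enum_uniq // => J1 J2 eqJ; apply/setP => i.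
  have := congr1 (nth false ^~ i) eqJ.
  by rewrite /= !(nth_map i) -?enumT ?size_enum_ord ?nth_ord_enum.
move=> c; rewrite mem_bool_seqs; apply/mapP/eqP.
  by case=> J _ ->; rewrite size_map size_enum_ord.
move=> size_c; exists [set i : 'I_n | nth false c i]; first exact: mem_index_enum.
apply: (@eq_from_nth _ false); first by rewrite size_map size_enum_ord.
move=> i; rewrite size_c => lt_in; have -> : i = Ordinal lt_in by [].
by rewrite (nth_map (Ordinal lt_in)) ?size_enum_ord // nth_ord_enum inE.
Qed.

Lemma size_interleave (a b : seq int) : size a = (size b).+1 ->
  size (interleave a b) = (size b).*2.+1.
Proof. by elim: b a => [|z b IH] [|w a] //= [size_a]; rewrite IH. Qed.

Lemma nth_interleave (a b : seq int) i : size a = (size b).+1 ->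
  nth 0 (interleave a b) i.*2 = nth 0 a i /\ nth 0 (interleave a b) i.*2.+1 = nth 0 b i.
Proof.
elim: b a i => [|z b IH] [|w a] i //= [size_a].
  by case: a size_a => // _; case: i => [|i]; rewrite ?doubleS /= ?nth_nil.
by case: i => [|i] //=; apply: IH.
Qed.

Lemma decode_evencf (a b : seq int) : size a = (size b).+1 ->
  s_as (evencf a b) = a /\ s_bs (evencf a b) = b.
Proof.
move=> size_a; rewrite /s_as /s_bs /evencf size_map size_interleave //.
have halve z : ((2 * z) %/ 2)%Z = z by rewrite mulKz.
split.
  have -> : uphalf (size b).*2.+1 = size a by rewrite /= doubleK size_a.
  rewrite -[RHS](mkseq_nth 0); apply/eq_in_map => i; rewrite mem_iota add0n => /andP [_ lt_i].
  rewrite mul2n (nth_map 0) ?(nth_interleave i size_a).1 ?halve //.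
  by rewrite size_interleave // ltnS leq_double -ltnS -size_a.
have -> : (size b).*2.+1./2 = size b by rewrite /= uphalf_double.
rewrite -[RHS](mkseq_nth 0); apply/eq_in_map => i; rewrite mem_iota add0n => /andP [_ lt_i].
rewrite mul2n (nth_map 0) ?(nth_interleave i size_a).2 ?halve //.
by rewrite size_interleave // ltnS ltn_double.
Qed.

Section MatrixModel.
Variables (R : fieldType) (x y : R).
Hypotheses (x_neq0 : x != 0) (y_neq0 : y != 0).

Lemma Gpos_Sr n : Gpos x y n.+1 = x ^+ n + y * Gpos x y n.
Proof.
rewrite /Gpos big_ord_recr /= subSS subn0 subnn expr0 mulr1 addrC big_distrr /=.
congr (_ + _); apply: eq_bigr => i _.
by rewrite mulrCA -exprS; congr (_ * _ ^+ _); have := ltn_ord i; lia.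
Qed.

Lemma Gpos_Sl n : Gpos x y n.+1 = y ^+ n + x * Gpos x y n.
Proof.
rewrite /Gpos big_ord_recl /= subSS !subn0 expr0 mul1r big_distrr /=.
congr (_ + _); apply: eq_bigr => i _.
by rewrite /bump /= add1n exprS mulrA; congr (_ * _ ^+ _); lia.
Qed.

Lemma Gpos0 : Gpos x y 0 = 0. Proof. by rewrite /Gpos big_ord0. Qed.

Lemma G_neg (n : nat) : G x y (- n%:Z) = - (x * y) ^- n * Gpos x y n.
Proof. by case: n => [|n]; rewrite ?oppr0 /= ?Gpos0 ?mulr0. Qed.

(* The cocycle identity behind the homomorphism property of [Umx]. *)
Lemma G_succ m : G x y (m + 1) = x ^ m + y * G x y m.
Proof.
case: m => [n|n]; first by rewrite -PoszD addn1 /= Gpos_Sr -exprnP.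
have -> : Negz n + 1 = - n%:Z by rewrite NegzE; lia.
rewrite NegzE !G_neg Gpos_Sl -invr_expz -exprnP !exprMn !exprS.
by field; rewrite !expf_neq0 ?x_neq0 ?y_neq0.
Qed.

(* The upper triangular matrix U(m) contributed by an entry 2m at odd position. *)
Definition Umx (m : int) : 'M[R]_2 := mx2 (x ^ m) (G x y m) 0 (y ^ m).

Lemma Umx0 : Umx 0 = 1%:M.
Proof. by rewrite /Umx /= Gpos0 mx2_1. Qed.

Lemma Umx_succ m : Umx m *m Umx 1 = Umx (m + 1).
Proof.
rewrite /Umx mul_mx2 G_succ !expfzDr // /= /Gpos big_ord1 expr0.
by congr mx2; ring.
Qed.

Lemma Umx_pred m : Umx m *m Umx (-1) = Umx (m - 1).
Proof.
have inv1 : Umx 1 *m Umx (-1) = 1%:M by apply: mulmx1C; rewrite Umx_succ addNr Umx0.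
by rewrite -[in LHS](subrK 1 m) -Umx_succ -mulmxA inv1 mulmx1.
Qed.

Lemma UmxD m n : Umx m *m Umx n = Umx (m + n).
Proof.
elim/int_rect: n => [|n IH|n IH]; first by rewrite Umx0 mulmx1 addr0.
  by rewrite -[n.+1]addn1 PoszD -Umx_succ mulmxA IH Umx_succ addrA.
by rewrite -[n.+1]addn1 PoszD opprD -Umx_pred mulmxA IH Umx_pred addrA.
Qed.

Definition uxy : R := (x - 1) * (y - 1).

(* The lower triangular (shear) matrix L(b) contributed by an entry 2b at even position. *)
Definition Lmx (b : int) : 'M[R]_2 := mx2 1 0 (b%:~R * uxy) 1.

Lemma LmxN b : Lmx b *m Lmx (- b) = 1%:M.
Proof. by rewrite mul_mx2 mx2_1 mulrNz; congr mx2; ring. Qed.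

Fixpoint chain (as_ bs : seq int) : 'M[R]_2 :=
  match as_, bs with
  | a :: as', b :: bs' => Umx a *m (Lmx b *m chain as' bs')
  | a :: as', [::] => Umx a *m chain as' [::]
  | [::], _ => 1%:M
  end.

Lemma chain_cat as1 bs1 as2 bs2 k : size as1 = (size bs1).+1 ->
  chain (as1 ++ as2) (bs1 ++ k :: bs2) = chain as1 bs1 *m (Lmx k *m chain as2 bs2).
Proof.
elim: bs1 as1 => [|b bs IH] [|a as1] //= [size_as].
  by case: as1 size_as => //= _; rewrite mulmx1.
by rewrite IH // !mulmxA.
Qed.

Definition mirror (l : seq int) : seq int := map -%R (rev l).

Lemma mirror_cons a l : mirror (a :: l) = mirror l ++ [:: - a].
Proof. by rewrite /mirror rev_cons -cats1 map_cat. Qed.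

Lemma size_mirror l : size (mirror l) = size l.
Proof. by rewrite size_map size_rev. Qed.

Lemma chain_mirror as_ bs : size as_ = (size bs).+1 ->
  chain as_ bs *m chain (mirror as_) (mirror bs) = 1%:M.
Proof.
elim: bs as_ => [|b bs IH] [|a as_] //= [size_as].
  by case: as_ size_as => //= _; rewrite !mulmx1 UmxD subrr Umx0.
rewrite !mirror_cons chain_cat ?size_mirror // /= mulmx1.
rewrite -!mulmxA (mulmxA (chain _ _)) IH // mul1mx.
by rewrite (mulmxA (Lmx b)) LmxN mul1mx UmxD subrr Umx0.
Qed.

(* det U(m) = (xy)^m and det L(b) = 1. *)
Lemma det_chain as_ bs :
  \det (chain as_ bs) = x ^ (\sum_(a <- as_) a) * y ^ (\sum_(a <- as_) a).
Proof.
elim: as_ bs => [|a as_ IH] [|b bs] /=; rewrite ?big_nil ?det1 ?mulr1 //;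
  rewrite big_cons !det_mulmx IH ?det_mx2 !expfzDr //; ring.
Qed.

(* The summand of Delta attached to the cut pattern c, with an accumulated
   prefix acc of the current block; [expansion] is the full subset sum. *)
Definition term (acc : int) (as_ bs : seq int) (c : seq bool) : R :=
  (\prod_(i < size bs | nth false c i) (nth 0 bs i)%:~R) * uxy ^+ count id c *
  \prod_(mu <- blocks as_ c acc) G x y mu.

Definition expansion (acc : int) (as_ bs : seq int) : R :=
  \sum_(c <- bool_seqs (size bs)) term acc as_ bs c.

Lemma Delta_expansion s : Delta x y s = expansion 0 (s_as s) (s_bs s).
Proof.
rewrite /Delta /expansion -sum_subsets; apply: eq_bigr => J _; rewrite /term.
congr (_ * _ * _).
  by apply: eq_bigl => i; rewrite (nth_map i) -?enumT ?size_enum_ord ?nth_ord_enum.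
congr (_ ^+ _); rewrite count_map cardE /enum_mem size_filter count_filter.
by apply: eq_count => i /=; rewrite andbT.
Qed.

(* Deciding whether to cut after a_1: either a_1 joins the next block, or
   the block acc + a_1 is closed and the factor b_1 u appears. *)
Lemma term_cons acc a as_ b bs (h : bool) c :
  term acc (a :: as_) (b :: bs) (h :: c) =
  if h then b%:~R * uxy * G x y (acc + a) * term 0 as_ bs c
  else term (acc + a) as_ bs c.
Proof.
rewrite /term big_mkcond big_ord_recl /= -big_mkcond /=.
by case: h; rewrite /= ?big_cons ?exprS ?mul1r //; ring.
Qed.

(* The subset sum satisfies the recursion of the (1,2) entry of the chain. *)
Lemma expansion_cons acc a as_ b bs : expansion acc (a :: as_) (b :: bs) =
  expansion (acc + a) as_ bs + b%:~R * uxy * G x y (acc + a) * expansion 0 as_ bs.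
Proof.
rewrite /expansion /= big_cat !big_map big_distrr /=.
by congr (_ + _); apply: eq_bigr => c _; rewrite term_cons.
Qed.

Lemma expansion_chain acc as_ bs : size as_ = (size bs).+1 ->
  expansion acc as_ bs = (Umx acc *m chain as_ bs) 0 1.
Proof.
elim: bs acc as_ => [|b bs IH] acc [|a as_] //= [size_as].
  case: as_ size_as => // _.
  by rewrite mulmx1 UmxD /expansion big_seq1 /term /= big_ord0 big_seq1 !mul1r mx2_01.
rewrite expansion_cons !IH // Umx0 mul1mx mulmxA UmxD /Lmx shear_entry.
by rewrite /Umx mx2_01.
Qed.

Lemma Delta_palindrome (a b : seq int) (k : int) : size a = (size b).+1 ->
  Delta x y (evencf (a ++ mirror a) (b ++ k :: mirror b)) =
  - (x ^ (\sum_(z <- a) z) * y ^ (\sum_(z <- a) z))^-1 * k%:~R * uxy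
    * (Delta x y (evencf a b)) ^+ 2.
Proof.
move=> size_a.
have size_r : size (a ++ mirror a) = (size (b ++ k :: mirror b)).+1.
  by rewrite !size_cat /= !size_mirror size_a addSn.
have [as_r bs_r] := decode_evencf size_r; have [as_s bs_s] := decode_evencf size_a.
rewrite !Delta_expansion as_r bs_r as_s bs_s !expansion_chain // Umx0 !mul1mx.
have inv := chain_mirror size_a.
rewrite chain_cat // /Lmx shear_entry inv mxE /= (mx2_inv inv) det_chain.
by rewrite add0r; ring.
Qed.
End MatrixModel.

(* The continued fraction recursion cf (2z :: l) = 1 / (2z - cf l) increases
   the size of denominators when z != 0. *)
Lemma norm_step (z v u : int) : z != 0 -> `|u| < `|v| -> `|v| < `|2 * z * v - u|.
Proof.
move=> z_neq0 lt_uv; have z_ge1 : 1 <= `|z| by lia.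
have norm_zv : `|2 * z * v| = 2 * `|z| * `|v| by rewrite !normrM.
have := ler_distD (2 * z * v) u; nia.
Qed.

Lemma cf_even_expansion (l : seq int) : all (fun z => z != 0) l ->
  exists u v : int, [/\ cf (map (fun z => 2 * z) l) = u%:~R / v%:~R, `|u| < `|v| &
    if odd (size l) then (exists u', u = 2 * u' + 1) /\ (exists v', v = 2 * v')
    else (exists u', u = 2 * u') /\ (exists v', v = 2 * v' + 1)].
Proof.
elim: l => [_|z l IH /andP [z_neq0 /IH [u [v [cf_l lt_uv parity]]]]] /=.
  by exists 0, 1; rewrite mul0r normr0 normr1 ltr01; split=> //; split; exists 0; ring.
have v_neq0 : v != 0 by rewrite -normr_gt0; apply: le_lt_trans lt_uv.
have lt_next := norm_step z_neq0 lt_uv.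
have w_neq0 : 2 * z * v - u != 0 by rewrite -normr_gt0; apply: le_lt_trans lt_next.
exists v, (2 * z * v - u); split=> //.
  rewrite /cf /= -/(cf _) cf_l.
  move: w_neq0; rewrite -(intr_eq0 rat) => w_neq0.
  rewrite !intrD !intrN !intrM in w_neq0 *; field.
  by rewrite w_neq0 intr_eq0 v_neq0.
case: (odd (size l)) parity => -[[u' ->] [v' ->]].
  by split; [exists v' | exists (2 * z * v' - u' - 1)]; ring.
by split; [exists v' | exists (z * (2 * v' + 1) - u')]; ring.
Qed.

Lemma all_interleave (p : pred int) a b : all p a -> all p b -> all p (interleave a b).
Proof.
elim: a b => [|w a IH] [|z b] //= /andP [pw pa] /andP [pz pb].
by rewrite pw pz IH.
Qed.

Lemma two_component_evencf (a b : seq int) : size a = (size b).+1 ->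
  all (fun z => z != 0) a -> all (fun z => z != 0) b -> two_component (evencf a b).
Proof.
move=> size_a nz_a nz_b.
have [u [v [cf_s lt_uv]]] := cf_even_expansion (all_interleave nz_a nz_b).
rewrite size_interleave //= odd_double => -[[u' u_odd] [v' v_even]].
rewrite /two_component /evencf cf_s; set t := u%:~R / v%:~R.
have v_neq0 : v != 0 by rewrite -normr_gt0; apply: le_lt_trans lt_uv.
have cross : numq t * v = u * denq t.
  apply: (@intr_inj rat); rewrite !intrM; apply/eqP.
  by rewrite -eqr_div ?intr_eq0 ?denq_neq0 // divq_num_den.
by apply/dvdzP; exists (numq t * v' - u' * denq t); rewrite u_odd v_even in cross; nia.
Qed.

Lemma upper_half_neq01 (z : algC) : 0 < 'Im z -> z != 0 /\ z != 1.
Proof.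
move=> Im_gt0; split; apply: contraTneq Im_gt0 => ->.
  by have /Creal_ImP -> := real0 algC; rewrite ltxx.
by have /Creal_ImP -> := real1 algC; rewrite ltxx.
Qed.

Theorem theorem16p9 (a b : seq int) (k : int) :
  size a = (size b).+1 ->
  all (fun z => z != 0) a -> all (fun z => z != 0) b -> k != 0 ->
  let s := evencf a b in
  let r := evencf (a ++ map -%R (rev a)) (b ++ k :: map -%R (rev b)) in
  [/\ two_component s, two_component r,
      exists (e : bool) (i j : int),
        Delta Xv Yv r = (-1) ^+ e * Xv ^ i * Yv ^ j * k%:~R
                        * (Xv - 1) * (Yv - 1) * (Delta Xv Yv s) ^+ 2
    & (forall x y : algC, 0 < 'Im x -> 0 < 'Im y -> Delta x y r != 0) <->
      (forall x y : algC, 0 < 'Im x -> 0 < 'Im y -> Delta x y s != 0)].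
Proof.
move=> size_a nz_a nz_b k_neq0; cbv zeta.
have nz_mirror l : all (fun z => z != 0) l -> all (fun z => z != 0) (mirror l).
  by move=> nz_l; rewrite all_map all_rev; apply: sub_all nz_l => z /=; rewrite oppr_eq0.
split.
- exact: two_component_evencf.
- apply: two_component_evencf; first by rewrite !size_cat /= !size_mirror size_a addSn.
    by rewrite all_cat nz_a nz_mirror.
  by rewrite all_cat /= nz_b k_neq0 nz_mirror.
- have Xv_neq0 : Xv != 0 by rewrite tofrac_eq0 polyX_eq0.
  have Yv_neq0 : Yv != 0 by rewrite tofrac_eq0 polyC_eq0 polyX_eq0.
  exists true, (- \sum_(z <- a) z), (- \sum_(z <- a) z).
  rewrite (Delta_palindrome Xv_neq0 Yv_neq0 k size_a) /uxy expr1 invfM !invr_expz.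
  by ring.
- have same_zeros (x y : algC) : 0 < 'Im x -> 0 < 'Im y ->
      (Delta x y (evencf (a ++ mirror a) (b ++ k :: mirror b)) != 0)
      = (Delta x y (evencf a b) != 0).
    move=> /upper_half_neq01 [x_neq0 x_neq1] /upper_half_neq01 [y_neq0 y_neq1].
    rewrite (Delta_palindrome x_neq0 y_neq0 k size_a) /uxy.
    rewrite !mulf_eq0 !negb_or oppr_eq0 invr_eq0 mulf_eq0 !expfz_eq0 intr_eq0 !subr_eq0.
    by rewrite (negbTE x_neq0) (negbTE y_neq0) k_neq0 x_neq1 y_neq1 !andbF orbF andTb andbb.
  split=> nz x y Im_x Im_y; first by rewrite -(same_zeros x y Im_x Im_y) nz.
  by rewrite (same_zeros x y Im_x Im_y) nz.
Qed.
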